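(* Let $L:\mathbb{R}^d\to\mathbb{R}^{\mathcal{Y}}_+$ be polyhedral and $\gamma:\Delta_{\mathcal{Y}}\rightrightarrows\mathcal{R}$ a finite property. If $L$ indirectly elicits $\gamma$, then there exists $\epsilon_0>0$ such that for all $0<\epsilon\le\epsilon_0$, the general $\epsilon$-thickened link construction for $L,\gamma,\epsilon,\|\cdot\|_\infty$ produces a link, i.e., the link envelope satisfies $\Psi(u)\neq\emptyset$ for all $u\in\mathbb{R}^d$.
   Context: $\mathcal{Y}$ is a finite label set, $\Delta_{\mathcal{Y}}$ the simplex, $\mathbb{R}^{\mathcal{Y}}_+$ the nonnegative orthant. A property $\gamma:\Delta_{\mathcal{Y}}\rightrightarrows\mathcal{R}$ maps each $p$ to a nonempty subset of $\mathcal{R}$; finite if $\mathcal{R}$ finite; level sets $\gamma_r=\{p:r\in\gamma(p)\}$. $L$ polyhedral: each coordinate $u\mapsto L(u)_y$ is a max of finitely many affine functions; it elicits $\Gamma(p)=\arg\min_u\langle p,L(u)\rangle$. $L$ indirectly elicits $\gamma$ if for all $u$ there is $r$ with $\Gamma_u\subseteq\gamma_r$. General construction for $L,\gamma,\epsilon,\|\cdot\|$: $\mathcal{U}=\{\Gamma(p):p\in\Delta_{\mathcal{Y}}\}$, $\Gamma_U=\{p:\Gamma(p)=U\}$, $R_U=\{r\in\mathcal{R}:\Gamma_U\subseteq\gamma_r\}$; initialize $\Psi(u)=\mathcal{R}$; for each $U\in\mathcal{U}$ and each $u$ with $\inf_{u^*\in U}\|u^*-u\|<\epsilon$ set $\Psi(u)\leftarrow\Psi(u)\cap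 R_U$; the construction produces a link if $\Psi(u)\neq\emptyset$ for all $u$, and the links produced are the $\psi$ with $\psi(u)\in\Psi(u)$ for all $u$. *)

From HB Require Import structures.
From mathcomp Require Import all_boot all_order all_algebra.
From mathcomp Require Import boolp classical_sets reals.
Set Implicit Arguments. Unset Strict Implicit. Unset Printing Implicit Defensive.
Import Order.TTheory GRing.Theory Num.Theory.
Local Open Scope ring_scope.
Local Open Scope classical_set_scope.

Section Defs.
Variables (R : realType) (d : nat) (Y Rep : finType).

Definition vec := 'I_d -> R.

Definition linf_dist (u v : vec) : R := \big[Num.max/0]_(i < d) `|u i - v i|.

Definition simplex (p : Y -> R) : Prop :=
  (forall y, 0 <= p y) /\ \sum_(y : Y) p y = 1.

(* each coordinate of L is a max of finitely many (at least one) affine functions *)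
Definition polyhedral (L : vec -> Y -> R) : Prop :=
  forall y : Y, exists (k : nat) (a : 'I_k.+1 -> vec) (b : 'I_k.+1 -> R),
    forall u : vec,
      (forall j, \sum_(i < d) a j i * u i + b j <= L u y) /\
      (exists j, L u y = \sum_(i < d) a j i * u i + b j).

Definition nonneg_loss (L : vec -> Y -> R) : Prop := forall u y, 0 <= L u y.

Definition is_property (gamma : (Y -> R) -> {set Rep}) : Prop :=
  forall p, simplex p -> exists r : Rep, r \in gamma p.

Definition exp_loss (L : vec -> Y -> R) (p : Y -> R) (u : vec) : R :=
  \sum_(y : Y) p y * L u y.

Definition Gamma (L : vec -> Y -> R) (p : Y -> R) : set vec :=
  [set u | forall u' : vec, exp_loss L p u <= exp_loss L p u'].

Definition Gamma_level (L : vec -> Y -> R) (u : vec) : set (Y -> R) :=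
  [set p | simplex p /\ Gamma L p u].

Definition gamma_level (gamma : (Y -> R) -> {set Rep}) (r : Rep) : set (Y -> R) :=
  [set p | simplex p /\ r \in gamma p].

Definition indirectly_elicits (L : vec -> Y -> R) (gamma : (Y -> R) -> {set Rep}) : Prop :=
  forall u : vec, exists r : Rep, Gamma_level L u `<=` gamma_level gamma r.

Definition calU (L : vec -> Y -> R) : set (set vec) :=
  [set U | exists p, simplex p /\ Gamma L p = U].

Definition Gamma_U (L : vec -> Y -> R) (U : set vec) : set (Y -> R) :=
  [set p | simplex p /\ Gamma L p = U].

Definition R_U (L : vec -> Y -> R) (gamma : (Y -> R) -> {set Rep}) (U : set vec) : set Rep :=
  [set r | Gamma_U L U `<=` gamma_level gamma r].

(* inf_{u* in U} ||u* - u||_oo < eps  (with inf over empty set = +oo) *)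
Definition near_set (eps : R) (U : set vec) (u : vec) : Prop :=
  exists2 us, U us & linf_dist us u < eps.

Definition Psi (L : vec -> Y -> R) (gamma : (Y -> R) -> {set Rep}) (eps : R) (u : vec)
  : set Rep :=
  [set r | forall U, calU L U -> near_set eps U u -> R_U L gamma U r].

Definition produces_link (L : vec -> Y -> R) (gamma : (Y -> R) -> {set Rep}) (eps : R) : Prop :=
  forall u : vec, Psi L gamma eps u !=set0.

End Defs.

(* Each coordinate of L is a maximum of affine pieces; a piece is active at u if
   it attains that maximum.  If every piece active at w is also active at u, then
   u is optimal for every distribution p for which w is: near w, L grows along
   v - u at most at the slopes of pieces active at w; as these are active at u
   too, their p-weighted slopes sum to at most E(v) - E(u), which is negative if
   v beats u.  Moreover there is a uniform eps0 such that, for every u, all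
   pieces active somewhere in the eps0-ball around u are simultaneously active
   at one point us.  This is because a finite family of pieces that is never
   jointly active cannot be approximately jointly active either: a finite linear
   system solvable with every positive slack is solvable exactly
   (Fourier-Motzkin).  A report elicited at us is then admissible for every
   level set U meeting the ball. *)

From HB Require Import structures.
From mathcomp Require Import all_boot all_order all_algebra.
From mathcomp Require Import boolp classical_sets reals.
From mathcomp Require Import ring lra.
Set Implicit Arguments.
Unset Strict Implicit.
Unset Printing Implicit Defensive.
Import Order.TTheory GRing.Theory Num.Theory.
Local Open Scope ring_scope.

Section SmallEnough.
Context {R : realType}.

Definition small_enough (P : R -> Prop) : Prop :=
  exists2 e, 0 < e & forall t, 0 < t -> t <= e -> P t.

Lemma small_enoughW (P Q : R -> Prop) :
  small_enough P -> (forall t, P t -> Q t) -> small_enough Q.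
Proof. by move=> [e e_gt0 eP] PQ; exists e => // t t_gt0 /(eP _ t_gt0)/PQ. Qed.

Lemma small_enough_forall (I : finType) (P : I -> R -> Prop) :
  (forall i, small_enough (P i)) -> small_enough (fun t => forall i, P i t).
Proof.
move=> /(_ _)/cid2-/all_sig[e /all_and2[e_gt0 eP]].
exists (\big[Num.min/1]_i e i).
  by apply: (big_ind (fun x => 0 < x)) => // x y; rewrite lt_min => -> ->.
move=> t t_gt0 t_le i; apply: eP t_gt0 (le_trans t_le _).
by rewrite (bigD1 i) //= ge_min lexx.
Qed.

Lemma small_enough_mul_le (D g : R) : 0 < g -> small_enough (fun t => t * D <= g).
Proof.
move=> g_gt0; have D1_gt0 : 0 < `|D| + 1 by rewrite ltr_wpDl.
exists (g / (`|D| + 1)); first by rewrite divr_gt0.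
move=> t t_gt0; rewrite ler_pdivlMr // => tD1_le.
have : t * D <= t * `|D| by rewrite ler_pM2l // ler_norm.
nra.
Qed.

End SmallEnough.

Section FourierMotzkin.
Context {R : realType}.

(* Vectors are indexed by [nat] so that the dimension can drop in the induction. *)
Definition dotn (n : nat) (a x : nat -> R) : R := \sum_(i < n) a i * x i.

Lemma dotnS n a x : dotn n.+1 a x = dotn n a x + a n * x n.
Proof. by rewrite /dotn big_ord_recr. Qed.

Lemma dotn_comb n (al be : R) a a' x :
  dotn n (fun k => al * a k + be * a' k) x = al * dotn n a x + be * dotn n a' x.
Proof.
rewrite /dotn !mulr_sumr -big_split; apply: eq_bigr => i _ /=.
by rewrite mulrDl !mulrA.
Qed.

Lemma eq_dotn n a x x' : (forall k, (k < n)%N -> x k = x' k) -> dotn n a x = dotn n a x'.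
Proof. by move=> xx'; apply: eq_bigr => i _; rewrite xx'. Qed.

Section System.
Variables (n : nat) (I : finType) (a : I -> nat -> R) (b : I -> R).

Definition solvable : Prop := exists x, forall i, dotn n (a i) x <= b i.

Definition approx_solvable : Prop :=
  forall e, 0 < e -> exists x, forall i, dotn n (a i) x <= b i + e.

Lemma approx_solvable_weighted (w : I -> R) : (forall i, 0 <= w i) ->
  (forall e, 0 < e -> exists x, forall i, dotn n (a i) x <= b i + w i * e) ->
  approx_solvable.
Proof.
move=> w_ge0 sol e e_gt0; pose W := 1 + \sum_i w i.
have W_gt0 : 0 < W by rewrite ltr_wpDr ?sumr_ge0.
have [x xP] := sol (e / W) (divr_gt0 e_gt0 W_gt0); exists x => i.
apply: le_trans (xP i) _; rewrite lerD2l mulrA ler_pdivrMr // mulrC ler_pM2l //.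
by rewrite /W (bigD1 i) //= addrCA lerDl addr_ge0 ?sumr_ge0.
Qed.

End System.

Lemma exists_between (I : finType) (Pl Pu : pred I) (fl fu : I -> R) :
  (forall i j, Pl i -> Pu j -> fl i <= fu j) ->
  exists t, (forall i, Pl i -> fl i <= t) /\ (forall j, Pu j -> t <= fu j).
Proof.
move=> flu; have [[i0 Pi0]|Pl0] := pselect (exists i0, Pl i0).
  exists (\big[Num.max/fl i0]_(i | Pl i) fl i); split.
    by move=> i Pi; rewrite (bigD1 i) //= le_max lexx.
  move=> j Pj; apply: (big_ind (fun x => x <= fu j)); first exact: flu.
    by move=> x y xj yj; rewrite ge_max xj yj.
  by move=> i Pi; apply: flu.
exists (\big[Num.min/0]_(j | Pu j) fu j); split=> [i Pi|j Pj].
  by case: Pl0; exists i.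
by rewrite (bigD1 j) //= ge_min lexx.
Qed.

Section Elimination.
Variables (n : nat) (I : finType) (a : I -> nat -> R) (b : I -> R).

Let c i := a i n.

(* Elimination of the last variable [x n]: rows with [c i = 0] are kept, and each
   pair of rows with [c p > 0 > c q] is combined so that [x n] cancels. *)
Definition fm_index (k : I + I * I) : bool :=
  match k with inl i => c i == 0 | inr (p, q) => (0 < c p) && (c q < 0) end.

Definition fm_row (k : I + I * I) : nat -> R :=
  match k with inl i => a i | inr (p, q) => fun m => - c q * a p m + c p * a q m end.

Definition fm_rhs (k : I + I * I) : R :=
  match k with inl i => b i | inr (p, q) => - c q * b p + c p * b q end.

Definition fm_weight (k : I + I * I) : R :=
  match k with inl _ => 1 | inr (p, q) => c p - c q end.

Lemma fm_row_slack x e k : fm_index k ->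
  (forall i, dotn n.+1 (a i) x <= b i + e) ->
  dotn n (fm_row k) x <= fm_rhs k + fm_weight k * e.
Proof.
case: k => [i /eqP ci0 | [p q] /andP[cp_gt0 cq_lt0]] sol /=.
  by have := sol i; rewrite dotnS -/(c i) ci0 mul0r addr0 mul1r.
rewrite dotn_comb; have := sol p; have := sol q; rewrite !dotnS -/(c p) -/(c q).
nra.
Qed.

Definition fm_a (k : {k | fm_index k}) : nat -> R := fm_row (val k).
Definition fm_b (k : {k | fm_index k}) : R := fm_rhs (val k).

Lemma fm_approx : approx_solvable n.+1 a b -> approx_solvable n fm_a fm_b.
Proof.
move=> sol; apply: (@approx_solvable_weighted _ _ _ _ (fun k => fm_weight (val k))).
  by case=> -[i|[p q]] //= /andP[cp_gt0 cq_lt0]; lra.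
move=> e e_gt0; have [x xP] := sol e e_gt0.
by exists x => k; apply: fm_row_slack (valP k) xP.
Qed.

Lemma fm_lift : solvable n fm_a fm_b -> solvable n.+1 a b.
Proof.
move=> [x' x'P]; pose rest i := b i - dotn n (a i) x'.
have pair_le p q : 0 < c p -> c q < 0 -> rest q / c q <= rest p / c p.
  move=> cp_gt0 cq_lt0; have pq : fm_index (inr (p, q)) by rewrite /= cp_gt0 cq_lt0.
  have := x'P (Sub (inr (p, q)) pq); rewrite /fm_a /fm_b /= dotn_comb => comb.
  by rewrite ler_ndivrMr // mulrAC ler_pdivrMr // /rest; nra.
have [t [t_ge t_le]] := @exists_between I (fun i => c i < 0) (fun j => 0 < c j)
  (fun i => rest i / c i) (fun i => rest i / c i) (fun i j ci cj => pair_le j i cj ci).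
exists (fun k => if k == n then t else x' k) => i.
rewrite dotnS eqxx (@eq_dotn _ _ _ x') => [|k kn]; last by rewrite ltn_eqF.
rewrite -/(c i); case: (ltgtP (c i) 0) => [ci_lt0|ci_gt0|ci0].
- by have := t_ge i ci_lt0; rewrite ler_ndivrMr // /rest; lra.
- by have := t_le i ci_gt0; rewrite ler_pdivlMr // /rest; lra.
- have i0 : fm_index (inl i) by rewrite /= ci0.
  by have := x'P (Sub (inl i) i0); rewrite ci0 mul0r addr0.
Qed.

End Elimination.

Lemma approx_solvable_solvable n (I : finType) (a : I -> nat -> R) (b : I -> R) :
  approx_solvable n a b -> solvable n a b.
Proof.
elim: n I a b => [|n IHn] I a b sol.
  exists (fun _ => 0) => i; rewrite /dotn big_ord0; apply/ler_addgt0Pr => e e_gt0.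
  by have [x /(_ i)] := sol e e_gt0; rewrite /dotn big_ord0.
exact/fm_lift/IHn/fm_approx.
Qed.

End FourierMotzkin.

Section LinfDist.
Variables (R : realType) (d : nat).

Lemma linf_dist_ge (w u : vec R d) i : `|w i - u i| <= linf_dist w u.
Proof. by rewrite /linf_dist (bigD1 i) //= le_max lexx. Qed.

Lemma linf_dist_ge0 (w u : vec R d) : 0 <= linf_dist w u.
Proof.
by apply: (big_ind (fun x => 0 <= x)) => // x y x_ge0 _; rewrite le_max x_ge0.
Qed.

Lemma sum_mul_le_linf (a w u : vec R d) :
  \sum_(i < d) a i * (u i - w i) <= (\sum_(i < d) `|a i|) * linf_dist w u.
Proof.
rewrite mulr_suml; apply: ler_sum => i _; apply: le_trans (ler_norm _) _.
by rewrite normrM ler_wpM2l // distrC linf_dist_ge.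
Qed.

Definition ext_vec (f : vec R d) : nat -> R :=
  fun k => if insub k is Some i then f i else 0.

Lemma ext_vecE (f : vec R d) (i : 'I_d) : ext_vec f i = f i.
Proof. by rewrite /ext_vec valK. Qed.

Lemma dotn_ext_vec (f : vec R d) (x : nat -> R) :
  dotn d (ext_vec f) x = \sum_(i < d) f i * x i.
Proof. by apply: eq_bigr => i _; rewrite ext_vecE. Qed.

End LinfDist.

Section MaxAffine.
Variables (R : realType) (d : nat) (Y J : finType).
Variables (L : vec R d -> Y -> R) (A : Y -> J -> vec R d) (B : Y -> J -> R).
Implicit Types (T : {set Y * J}) (u v w x : vec R d).

Definition aff y j (u : vec R d) : R := \sum_(i < d) A y j i * u i + B y j.

Definition slope y j (h : vec R d) : R := \sum_(i < d) A y j i * h i.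

Definition is_max_affine : Prop :=
  forall y u, (forall j, aff y j u <= L u y) /\ exists j, L u y = aff y j u.

Definition active (u : vec R d) : {set Y * J} :=
  [set yj | aff yj.1 yj.2 u == L u yj.1].

Lemma aff_shift y j w h t :
  aff y j (fun i => w i + t * h i) = aff y j w + t * slope y j h.
Proof.
rewrite /aff /slope mulr_sumr addrAC -big_split /=; congr (_ + _).
by apply: eq_bigr => i _; rewrite mulrDr mulrCA.
Qed.

Lemma affB y j u v : aff y j v - aff y j u = slope y j (fun i => v i - u i).
Proof.
rewrite /aff /slope opprD addrACA subrr addr0 -sumrB.
by apply: eq_bigr => i _; rewrite mulrBr.
Qed.

Lemma aff_diff y j j' x :
  aff y j' x - aff y j x = \sum_(i < d) (A y j' i - A y j i) * x i + (B y j' - B y j).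
Proof.
rewrite /aff opprD addrACA -sumrB; congr (_ + _).
by apply: eq_bigr => i _; rewrite mulrBl.
Qed.

Hypothesis L_max : is_max_affine.

Lemma aff_le y j u : aff y j u <= L u y.
Proof. by have [] := L_max y u. Qed.

Lemma active_eq y j u : (y, j) \in active u -> aff y j u = L u y.
Proof. by rewrite inE => /eqP. Qed.

Lemma active_slope_le y j u v : (y, j) \in active u ->
  L u y + slope y j (fun i => v i - u i) <= L v y.
Proof. by move=> /active_eq <-; rewrite -affB addrC subrK aff_le. Qed.

Lemma L_shift_le y w h : exists2 j, (y, j) \in active w &
  small_enough (fun t => L (fun i => w i + t * h i) y <= L w y + t * slope y j h).
Proof.
have [_ [j0 Lj0]] := L_max y w.
have act_j0 : (y, j0) \in active w by rewrite inE /= Lj0.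
case: (@arg_maxP _ _ _ j0 (fun j => (y, j) \in active w) (fun j => slope y j h) act_j0).
move=> jm act_jm jm_max.
exists jm => //.
suff : small_enough (fun t => forall j,
    aff y j (fun i => w i + t * h i) <= L w y + t * slope y jm h).
  by move/small_enoughW; apply=> t affP; have [_ [j ->]] := L_max y (fun i => w i + t * h i).
apply: small_enough_forall => j; have [act_j|inact_j] := boolP ((y, j) \in active w).
  exists 1 => // t t_gt0 _; rewrite aff_shift active_eq // lerD2l.
  by rewrite ler_pM2l //; apply: jm_max.
have gap_gt0 : 0 < L w y - aff y j w.
  rewrite subr_gt0 lt_neqAle aff_le andbT.
  by apply: contraNneq inact_j => Lj; rewrite inE /= Lj.
apply: (small_enoughW (small_enough_mul_le (slope y j h - slope y jm h) gap_gt0)) => t.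
by rewrite aff_shift; lra.
Qed.

Lemma Gamma_active_mono (p : Y -> R) w u : (forall y, 0 <= p y) ->
  Gamma L p w -> active w \subset active u -> Gamma L p u.
Proof.
move=> p_ge0 Gw /fintype.subsetP wu v; rewrite leNgt; apply/negP => vu.
pose h i := v i - u i.
have /choice[jy /all_and2[act_jy jyP]] : forall y, exists j, (y, j) \in active w /\
    small_enough (fun t => L (fun i => w i + t * h i) y <= L w y + t * slope y j h).
  by move=> y; have [j ? ?] := L_shift_le y w h; exists j.
pose phi := \sum_y p y * slope y (jy y) h.
have phi_lt0 : phi < 0.
  suff : exp_loss L p u + phi <= exp_loss L p v by lra.
  rewrite /exp_loss /phi -big_split; apply: ler_sum => y _ /=.
  by rewrite -mulrDr; apply: ler_wpM2l => //; apply: active_slope_le; apply: wu.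
have [t t_gt0 /(_ t t_gt0 (lexx t)) tP] := small_enough_forall jyP.
have := Gw (fun i => w i + t * h i); rewrite leNgt => /negP; apply.
apply: (@le_lt_trans _ _ (exp_loss L p w + t * phi)); last first.
  by rewrite gtrDl pmulr_rlt0.
rewrite /exp_loss /phi mulr_sumr -big_split; apply: ler_sum => y _ /=.
by rewrite mulrCA -mulrDr; apply: ler_wpM2l.
Qed.

Definition nearly_active T (e : R) x : Prop :=
  forall y j j', (y, j) \in T -> aff y j' x <= aff y j x + e.

Definition jointly_active T : Prop := exists x, T \subset active x.

Lemma nearly_active0 T x : nearly_active T 0 x -> T \subset active x.
Proof.
move=> Tx; apply/fintype.subsetP => -[y j] Tyj; rewrite inE eq_le aff_le /=.
by have [_ [j' ->]] := L_max y x; rewrite -[aff y j x]addr0 Tx.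
Qed.

Lemma nearly_active_closed T :
  (forall e, 0 < e -> exists x, nearly_active T e x) -> exists x, nearly_active T 0 x.
Proof.
pose a (k : {k : Y * J * J | k.1 \in T}) :=
  ext_vec (fun i => A (val k).1.1 (val k).2 i - A (val k).1.1 (val k).1.2 i).
pose b (k : {k : Y * J * J | k.1 \in T}) :=
  B (val k).1.1 (val k).1.2 - B (val k).1.1 (val k).2.
move=> near_sol; have [x xP] : solvable d a b.
  apply: approx_solvable_solvable => e /near_sol[x xe].
  exists (ext_vec x) => -[[[y j] j'] Tyj].
  rewrite /a /b /= dotn_ext_vec; under eq_bigr do rewrite ext_vecE.
  have := xe y j j' Tyj; have := aff_diff y j j' x; lra.
exists (fun i => x i) => y j j' Tyj; have := aff_diff y j j' (fun i => x i).
have := xP (Sub ((y, j), j') Tyj); rewrite /a /b /= dotn_ext_vec; lra.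
Qed.

Definition gap_lipschitz : R :=
  \sum_(k : Y * J * J) \sum_(i < d) `|A k.1.1 k.2 i - A k.1.1 k.1.2 i|.

Lemma nearly_active_near T u t :
  (forall yj, yj \in T -> exists2 w, linf_dist w u <= t & yj \in active w) ->
  nearly_active T (gap_lipschitz * t) u.
Proof.
move=> near y j j' /near[w wu act_w].
have w_le : aff y j' w <= aff y j w by rewrite (active_eq act_w) aff_le.
have gap_le : \sum_(i < d) `|A y j' i - A y j i| <= gap_lipschitz.
  rewrite /gap_lipschitz (bigD1 ((y, j), j')) //= lerDl.
  by apply: sumr_ge0 => k _; apply: sumr_ge0.
have move_le : (aff y j' u - aff y j u) - (aff y j' w - aff y j w) <=
    gap_lipschitz * t.
  rewrite !aff_diff opprD addrACA subrr addr0 -sumrB.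
  under eq_bigr do rewrite -mulrBr.
  apply: le_trans (sum_mul_le_linf _ _ _) _.
  by apply: ler_pM => //; [apply: sumr_ge0 | apply: linf_dist_ge0].
lra.
Qed.

Lemma jointly_active_near T : small_enough (fun t => forall u,
  (forall yj, yj \in T -> exists2 w, linf_dist w u < t & yj \in active w) ->
  jointly_active T).
Proof.
have [ja|nja] := pselect (jointly_active T); first by exists 1.
have [e e_gt0 eP] : exists2 e, 0 < e & forall x, ~ nearly_active T e x.
  apply: contra_notP nja => no_gap.
  have [|x x0] := @nearly_active_closed T; last by exists x; apply: nearly_active0.
  move=> e e_gt0; apply: contrapT => no_sol; apply: no_gap.
  by exists e => // x xe; apply: no_sol; exists x.
have lip_ge0 : 0 <= gap_lipschitz by do 2!apply: sumr_ge0 => ? _.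
exists (e / (gap_lipschitz + 1)); first by rewrite divr_gt0 ?ltr_wpDl.
move=> t t_gt0; rewrite ler_pdivlMr ?ltr_wpDl // => t_le u near.
have near_u : nearly_active T (gap_lipschitz * t) u.
  by apply: nearly_active_near => yj /near[w /ltW wu act_w]; exists w.
case: (eP u) => y j j' Tyj; apply: le_trans (near_u y j j' Tyj) _.
rewrite lerD2l; nra.
Qed.

Lemma uniform_active_cover : exists2 eps0, 0 < eps0 & forall u, exists us,
  forall w, linf_dist w u < eps0 -> active w \subset active us.
Proof.
have [eps0 eps0_gt0 eps0P] := small_enough_forall jointly_active_near.
exists eps0 => // u.
pose T := [set yj | `[< exists2 w, linf_dist w u < eps0 & yj \in active w >]].
have [us Tus] : jointly_active T.
  by apply: (eps0P eps0 eps0_gt0 (lexx _) T u) => yj; rewrite inE => /asboolP.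
exists us => w wu; apply: fintype.subset_trans Tus.
by apply/fintype.subsetP => yj act_w; rewrite inE; apply/asboolP; exists w.
Qed.

End MaxAffine.

Lemma polyhedral_max_affine (R : realType) d (Y : finType) (L : vec R d -> Y -> R) :
  polyhedral L -> exists K (A : Y -> 'I_K.+1 -> vec R d) (B : Y -> 'I_K.+1 -> R),
    is_max_affine L A B.
Proof.
move=> L_poly.
have /choice[f fP] : forall y,
    exists s : {k : nat & ('I_k.+1 -> vec R d) * ('I_k.+1 -> R)}, forall u,
      (forall j, \sum_(i < d) (projT2 s).1 j i * u i + (projT2 s).2 j <= L u y) /\
      exists j, L u y = \sum_(i < d) (projT2 s).1 j i * u i + (projT2 s).2 j.
  by move=> y; have [k [a [b ab]]] := L_poly y; exists (existT _ k (a, b)).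
pose K := \max_y projT1 (f y).
have le_K y : ((projT1 (f y)).+1 <= K.+1)%N by rewrite ltnS /K (bigD1 y) //= leq_maxl.
exists K, (fun y j => (projT2 (f y)).1 (inord j)), (fun y j => (projT2 (f y)).2 (inord j)).
move=> y u; have [f_le [j0 f_eq]] := fP y u; split=> [j|]; first exact: f_le.
by exists (widen_ord (le_K y) j0); rewrite f_eq /aff /= inord_val.
Qed.

Theorem proposition8 (R : realType) (d : nat) (Y Rep : finType)
    (L : vec R d -> Y -> R) (gamma : (Y -> R) -> {set Rep}) :
  polyhedral L -> nonneg_loss L -> is_property gamma ->
  indirectly_elicits L gamma ->
  exists2 eps0 : R, 0 < eps0 &
    forall eps : R, 0 < eps -> eps <= eps0 -> produces_link L gamma eps.
Proof.
move=> L_poly _ _ L_elicits.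
have [K [A [B L_max]]] := polyhedral_max_affine L_poly.
have [eps0 eps0_gt0 cover] := uniform_active_cover L_max.
exists eps0 => // eps _ eps_le u.
have [us act_us] := cover u; have [r Gamma_us_r] := L_elicits us.
exists r => U _ [w Uw wu] q [q_simplex Gamma_q].
apply: Gamma_us_r; split=> //.
apply: (Gamma_active_mono L_max (proj1 q_simplex) _ (act_us w _)).
  by rewrite Gamma_q.
exact: lt_le_trans eps_le.
Qed.
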